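(* Let $m\neq\pm1$ be a square-free integer, $p$ a prime, $k$ a positive integer, $\alpha$ a root of $X^{p^k}-m$, $M=\mathbb{Q}(\alpha)$, $r$ the remainder of $m$ modulo $p^{k+1}$, $s:=v_p(m^p-m)-1$, and for $t\in\mathbb{N}$ let $h^{(r)}_t(X)=\frac{X^{p^k}-r^{p^t}}{X^{p^{k-t}}-r}=\sum_{i=0}^{p^t-1} r^{i}X^{p^k-(i+1)p^{k-t}}\in\mathbb{Z}[X]$. Suppose $k\leq s$. Then the following $p^k$ elements of $M$ are algebraic integers and are linearly independent over $\mathbb{Q}$: $$\alpha^j\cdot\frac{h^{(r)}_t(\alpha)}{p^t}\quad\text{for } 0\leq t\leq k-1,\ 0\leq j\leq p^{k-t}-p^{k-t-1}-1,$$ together with $$\frac{h^{(r)}_k(\alpha)}{p^k}.$$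
   Context: $v_p$ denotes the $p$-adic valuation on $\mathbb{Q}$. *)

From mathcomp Require Import all_boot all_order all_algebra all_field.
Set Implicit Arguments. Unset Strict Implicit. Unset Printing Implicit Defensive.
Import Order.TTheory GRing.Theory Num.Theory.
Local Open Scope ring_scope.

Definition squarefree_int (m : int) : Prop :=
  m != 0 /\ forall q : nat, prime q -> ~~ (q ^ 2 %| `|m|)%N.

Definition vp_int (p : nat) (z : int) : nat := logn p `|z|.

Definition hpoly (r : int) (p k t : nat) : {poly int} :=
  \sum_(i < p ^ t) r ^+ i *: 'X^(p ^ k - i.+1 * p ^ (k - t)).

Definition evalZ (P : {poly int}) (x : algC) : algC :=
  (map_poly (fun z : int => z%:~R) P).[x].

Definition cor_family (r : int) (p k : nat) (a : algC) : seq algC :=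
  flatten [seq [seq a ^+ j * (evalZ (hpoly r p k t) a / (p ^ t)%:R)
               | j <- iota 0 (p ^ (k - t) - p ^ (k - t - 1))]
          | t <- iota 0 k]
  ++ [:: evalZ (hpoly r p k k) a / (p ^ k)%:R].

Definition Qlin_indep (s : seq algC) : Prop :=
  forall c : 'I_(size s) -> rat,
    \sum_(i < size s) ratr (c i) * s`_i = 0 -> forall i, c i = 0.

From mathcomp Require Import all_boot all_order all_algebra all_field.
From mathcomp Require Import zify ring.
Set Implicit Arguments. Unset Strict Implicit. Unset Printing Implicit Defensive.
Import Order.TTheory GRing.Theory Num.Theory.
Local Open Scope ring_scope.

(* Write beta = alpha^(p^(k-t)), gamma = beta - r and n = p^t. As m^p = m, hence
   r^n = m^n = m (mod p^(k+1)), the integer D = (m - r^n) / n is divisible by p,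
   and h_t(alpha) / n = D / gamma because gamma h_t(alpha) = beta^n - r^n = m - r^n.
   Dividing (gamma + r)^n - r^n = n D by gamma^n gives a monic equation for D / gamma
   whose coefficients C(n, j) D^(n-1-j) r^j / n are integers, as p^t divides
   C(p^t, j) p^(p^t-1-j).
   For independence, the elements are the values at alpha of rational polynomials
   of degrees 0, ..., p^k - 1, and X^(p^k) - m is irreducible: the constant term c
   of the minimal polynomial of alpha, of degree d, satisfies |c|^(p^k) = |m|^d,
   and comparing valuations at a prime exactly dividing m forces d = p^k. *)

Lemma dvdn_pexp_bin (p t j : nat) : prime p -> (j < p ^ t)%N ->
  (p ^ t %| 'C(p ^ t, j) * p ^ (p ^ t - 1 - j))%N.
Proof.
move=> pp; have p1 := prime_gt1 pp; set n := (p ^ t)%N => jn.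
case: j jn => [|j] jn.
  by rewrite bin0 mul1n dvdn_exp2l //; have := ltn_expl t p1; lia.
have [j' cj' Ej] := pfactor_coprime pp (ltn0Sn j); set e := logn p j.+1 in Ej.
have n_dvd : (n %| p ^ e * 'C(n, j.+1))%N.
  have cnj : coprime n j' by rewrite coprimeXl.
  by rewrite -(Gauss_dvdr _ cnj) mulnA -Ej -mul_bin_diag dvdn_mulr.
have pe_j : (p ^ e %| j.+1)%N by rewrite Ej dvdn_mull.
have e_t : (e < t)%N by rewrite -(ltn_exp2l _ _ p1) (leq_ltn_trans (dvdn_leq _ pe_j)).
have pe_le : (p ^ e <= n - j.+1)%N.
  by apply: dvdn_leq; [lia | rewrite dvdn_sub // dvdn_exp2l // ltnW].
apply: (dvdn_trans n_dvd); rewrite mulnC dvdn_mul // dvdn_exp2l //.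
by have := ltn_expl e p1; lia.
Qed.

Lemma dvdz_pexp_bin (p t j : nat) (D : int) : prime p -> (p %| D)%Z ->
  (j < p ^ t)%N -> ((p ^ t)%:Z %| 'C(p ^ t, j)%:Z * D ^+ (p ^ t - 1 - j))%Z.
Proof.
move=> pp /dvdzP[D1 ->] jn.
have -> : (D1 * p) ^+ (p ^ t - 1 - j) = D1 ^+ (p ^ t - 1 - j) * (p ^ (p ^ t - 1 - j))%N%:Z.
  by rewrite exprMn -natz -natrX natz.
by rewrite mulrCA dvdz_mull // -PoszM dvdzE dvdn_pexp_bin.
Qed.

Lemma eqz_mod_exp_pexp (M m : int) (p t : nat) :
  (m ^+ p == m %[mod M])%Z -> (m ^+ (p ^ t) == m %[mod M])%Z.
Proof.
move=> /eqP mp; elim: t => [|t /eqP IHt]; first by rewrite expn0 expr1.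
by rewrite expnSr exprM -modzXm IHt modzXm mp.
Qed.

Lemma binomial_quotient_Aint (n : nat) (r D : int) (g x : algC) :
  (0 < n)%N -> g != 0 -> g * x = D%:~R ->
  (g + r%:~R) ^+ n - r%:~R ^+ n = n%:R * D%:~R ->
  (forall j, (j < n)%N -> (n%:Z %| 'C(n, j)%:Z * D ^+ (n - 1 - j))%Z) ->
  x \in Aint.
Proof.
move=> n_gt0 g_neq0 gxD binD dvdC.
pose A j : int := ('C(n, j)%:Z * D ^+ (n - 1 - j) * r ^+ j %/ n%:Z)%Z.
have nA j : (j < n)%N ->
    n%:R * (A j)%:~R = 'C(n, j)%:R * D%:~R ^+ (n - 1 - j) * r%:~R ^+ j :> algC.
  move=> jn; rewrite -[n%:R]/((n%:Z)%:~R) -intrM mulrC divzK; last exact/dvdz_mulr/dvdC.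
  by rewrite !intrM !rmorphXn.
have binD' : \sum_(j < n) (g ^+ (n - j) * r%:~R ^+ j) *+ 'C(n, j) = n%:R * D%:~R.
  by rewrite -binD exprDn big_ord_recr /= subnn expr0 mul1r binn mulr1n addrK.
pose Q : {poly algC} := 'X^n - \poly_(j < n) (A j)%:~R.
apply: (@root_monic_Aint Q).
- rewrite /root /Q !hornerE horner_poly subr_eq0; apply/eqP.
  have ngn_neq0 : n%:R * g ^+ n != 0 by rewrite mulf_neq0 ?pnatr_eq0 -?lt0n ?expf_neq0.
  apply: (mulfI ngn_neq0); rewrite mulr_sumr.
  (* After multiplication by n g^n both sides become D^(n-1) ((g + r)^n - r^n). *)
  transitivity (D%:~R ^+ (n - 1) * (n%:R * D%:~R) : algC).
    by rewrite -mulrA -exprMn gxD mulrCA -exprSr subn1 prednK.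
  rewrite -binD' mulr_sumr; apply: eq_bigr => -[j /= jn] _.
  have splitn y : y ^+ n = y ^+ (n - j) * y ^+ j :> algC.
    by rewrite -exprD subnK // ltnW.
  have splitn1 y : y ^+ (n - 1) = y ^+ (n - 1 - j) * y ^+ j :> algC.
    by rewrite -exprD subnK //; lia.
  transitivity (n%:R * (A j)%:~R * g ^+ (n - j) * (g ^+ j * x ^+ j)).
    by rewrite nA // -exprMn gxD splitn1; ring.
  by rewrite splitn; ring.
- by rewrite /Q monicE lead_coefDl ?size_polyN ?size_polyXn ?ltnS ?size_poly ?lead_coefXn.
- apply/polyOverP => i; rewrite /Q coefB coefXn coef_poly.
  by apply: rpredB; [case: eqP | case: ifP]; rewrite ?rpred0 ?rpred1 ?intr_int.
Qed.

Lemma Aint_of_exprn_int (N : nat) (m : int) (x : algC) :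
  (0 < N)%N -> x ^+ N = m%:~R -> x \in Aint.
Proof.
move=> N_gt0 xN; apply: (@root_monic_Aint ('X^N - (m%:~R)%:P)).
- by rewrite rootE !hornerE xN subrr.
- exact: monicXnsubC.
- by rewrite polyOverXnsubC intr_int.
Qed.

Lemma squarefree_int_prime_logn1 (m : int) :
  squarefree_int m -> m != 1 -> m != -1 -> exists2 q, prime q & logn q `|m| = 1%N.
Proof.
move=> [m_neq0 sqf] m_neq1 m_neqN1.
have m_gt1 : (1 < `|m|)%N by case: m m_neq0 m_neq1 m_neqN1 {sqf} => [[|[|n]]|[|n]].
have q_pr := pdiv_prime m_gt1; exists (pdiv `|m|) => //.
have : (1 <= logn (pdiv `|m|) `|m|)%N by rewrite -pfactor_dvdn ?expn1 ?pdiv_dvd //; lia.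
have : ~~ (2 <= logn (pdiv `|m|) `|m|)%N by rewrite -pfactor_dvdn ?sqf //; lia.
lia.
Qed.

Lemma normr_coef0_dvdp_XnsubC (C : numClosedFieldType) (N : nat) (c : C) (G : {poly C}) :
  G \is monic -> G %| 'X^N - c%:P -> `|G`_0| ^+ N = `|c| ^+ (size G).-1.
Proof.
move=> monG dvdG; have [rs Grs] := closed_field_poly_normal G.
rewrite (monicP monG) scale1r in Grs.
have rootN z : z \in rs -> `|- z| ^+ N = `|c|.
  move=> zrs; have /(root_dvdp dvdG) : root G z by rewrite Grs root_prod_XsubC.
  by rewrite rootE !hornerE subr_eq0 normrN => /eqP <-; rewrite normrX.
rewrite Grs size_prod_XsubC -horner_coef0 horner_prod normr_prod -prodrXl.
rewrite (eq_big_seq (fun=> `|c|)) => [|z /rootN <-]; last by rewrite !hornerE.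
by rewrite big_tnth prodr_const card_ord.
Qed.

Lemma free_poly_distinct_size (R : idomainType) (n : nat) (P : 'I_n -> {poly R})
    (c : 'I_n -> R) :
  injective (fun i => size (P i)) -> (forall i, P i != 0) ->
  \sum_i c i *: P i = 0 -> forall i, c i = 0.
Proof.
move=> size_inj P_neq0 sum0 i0; apply/eqP/negPn/negP => ci0_neq0.
have [i ci_neq0 i_max] := @arg_maxnP _ i0 (fun i => c i != 0) (fun i => size (P i)) ci0_neq0.
have /eqP := congr1 (fun Q : {poly R} => Q`_(size (P i)).-1) sum0.
rewrite coef_sum coef0 (bigD1 i) //= big1 => [|j j_neq_i].
  rewrite addr0 coefZ -lead_coefE mulf_eq0 lead_coef_eq0.
  by rewrite (negbTE ci_neq0) (negbTE (P_neq0 i)).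
rewrite coefZ; have [->|cj_neq0] := eqVneq (c j) 0; first by rewrite mul0r.
have size_neq : size (P j) != size (P i) by apply: contra j_neq_i => /eqP/size_inj ->.
rewrite nth_default ?mulr0 // -ltnS prednK ?size_poly_gt0 //.
by rewrite ltn_neqAle size_neq; apply: i_max.
Qed.

Section PureRadical.

Variables (m : int) (N : nat) (alpha : algC).
Hypotheses (sqf_m : squarefree_int m) (m_neq1 : m != 1) (m_neqN1 : m != -1).
Hypotheses (N_gt0 : (0 < N)%N) (alphaN : alpha ^+ N = m%:~R).

Lemma size_minCpoly_radical : size (minCpoly alpha) = N.+1.
Proof.
have [g0 [Dg0 mon_g0] min_g0] := minCpolyP alpha.
set G := minCpoly alpha in Dg0 *.
have monG : G \is monic by rewrite Dg0 map_monic.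
have Xm : map_poly ratr ('X^N - (m%:~R)%:P) = 'X^N - (m%:~R)%:P :> {poly algC}.
  by rewrite rmorphB /= map_polyXn map_polyC /= rmorph_int.
have dvdG : G %| 'X^N - (m%:~R)%:P.
  by rewrite -Xm Dg0 dvdp_map -min_g0 Xm rootE !hornerE alphaN subrr.
have G_le : (size G <= N.+1)%N.
  by rewrite -(size_XnsubC (m%:~R : algC) N_gt0) dvdp_leq // -size_poly_eq0 size_XnsubC.
have G_int : G \is a polyOver Num.int := Aint_of_exprn_int N_gt0 alphaN.
have [c Gc] : exists c : int, G`_0 = c%:~R by apply/intrP/(polyOverP G_int).
have normr_intr (z : int) : `|z%:~R : algC| = (absz z)%:R by rewrite -intr_norm -abszE.
have [q q_pr m_q] := squarefree_int_prime_logn1 sqf_m m_neq1 m_neqN1.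
have /eqP := normr_coef0_dvdp_XnsubC monG dvdG.
rewrite Gc !normr_intr -!natrX eqr_nat => /eqP/(congr1 (logn q)).
rewrite !lognX m_q muln1; have := size_minCpoly alpha; rewrite -/G.
move: (size G) G_le (logn q `|c|) => sG sG_le [|L]; first lia.
by have := leq_pmulr N (ltn0Sn L); lia.
Qed.

Lemma radical_root_size_gt (g : {poly rat}) :
  g != 0 -> root (map_poly ratr g) alpha -> (N < size g)%N.
Proof.
move=> g_neq0; have [g0 [Dg0 _] min_g0] := minCpolyP alpha.
rewrite min_g0 => /(dvdp_leq g_neq0).
by rewrite -ltnS -size_minCpoly_radical Dg0 size_map_poly.
Qed.

Lemma Qlin_indep_radical (s : seq {poly rat}) :
  [seq size P | P : {poly rat} <- s] = iota 1 N ->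
  Qlin_indep [seq (map_poly ratr P).[alpha] | P <- s].
Proof.
move=> sizes c sum0; rewrite size_map in c sum0 *.
have size_s : size s = N by move/(congr1 size): sizes; rewrite size_map size_iota.
have size_nth (i : 'I_(size s)) : size s`_i = i.+1.
  by rewrite -(nth_map 0 0%N (fun P : {poly rat} => size P)) // sizes nth_iota ?add1n -?size_s.
apply: (@free_poly_distinct_size _ _ (fun i => s`_i)) => [i j /= | i | ].
- by rewrite !size_nth => -[/ord_inj].
- by rewrite -size_poly_eq0 size_nth.
apply/eqP/negPn/negP; set F := \sum_i _ => F_neq0.
have F_size : (size F <= N)%N.
  apply: leq_trans (size_sum _ _ _) _; apply/bigmax_leqP => i _.
  by rewrite (leq_trans (size_scale_leq _ _)) // size_nth -size_s.
suff /(radical_root_size_gt F_neq0) : root (map_poly ratr F) alpha.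
  by rewrite ltnNge F_size.
rewrite rootE -{}[X in _ == X]sum0 rmorph_sum horner_sum; apply/eqP/eq_bigr => i _.
by rewrite (nth_map 0) //= map_polyZ hornerZ.
Qed.
End PureRadical.

Lemma size_hpoly (r : int) (p k t : nat) : (0 < p)%N -> (t <= k)%N ->
  size (hpoly r p k t) = (p ^ k - p ^ (k - t)).+1.
Proof.
move=> p_gt0 tk; have pk : (p ^ k = p ^ t * p ^ (k - t))%N by rewrite -expnD subnKC.
set q := (p ^ (k - t))%N in pk *; have q_gt0 : (0 < q)%N by rewrite expn_gt0 p_gt0.
have [u pt] : exists u, (p ^ t = u.+1)%N.
  by exists (p ^ t).-1; rewrite prednK // expn_gt0 p_gt0.
rewrite /hpoly pt big_ord_recl expr0 scale1r mul1n -/q size_polyDl size_polyXn //.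
apply: leq_ltn_trans (size_sum _ _ _) _; rewrite ltnS.
apply/bigmax_leqP => i _; apply: leq_trans (size_scale_leq _ _) _.
rewrite size_polyXn lift0.
have : (2 * q <= i.+2 * q)%N by rewrite leq_mul2r orbT.
have : (i.+2 * q <= u.+1 * q)%N by rewrite leq_mul2r ltnS ltn_ord orbT.
lia.
Qed.

Lemma hpoly_geometric (r : int) (p k t : nat) (x : algC) : (t <= k)%N ->
  (x ^+ (p ^ (k - t)) - r%:~R) * evalZ (hpoly r p k t) x = x ^+ (p ^ k) - r%:~R ^+ (p ^ t).
Proof.
move=> tk; set q := (p ^ (k - t))%N.
have pk : (p ^ k = q * p ^ t)%N by rewrite -expnD subnK.
rewrite [in RHS]pk exprM subrXX; congr (_ * _).
rewrite /evalZ /hpoly raddf_sum horner_sum; apply: eq_bigr => i _.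
rewrite /= map_polyZ map_polyXn hornerZ hornerXn rmorphXn /= mulrC -exprM.
by congr (x ^+ _ * _); rewrite pk -/q; have := ltn_ord i; nia.
Qed.

Lemma hpoly_div_Aint (m r : int) (p k t : nat) (alpha : algC) :
  squarefree_int m -> m != 1 -> m != -1 -> prime p -> alpha ^+ (p ^ k) = m%:~R ->
  ((p ^ k.+1)%:Z %| m ^+ p - m)%Z -> (r == m %[mod (p ^ k.+1)%:Z])%Z -> (t <= k)%N ->
  evalZ (hpoly r p k t) alpha / (p ^ t)%:R \in Aint.
Proof.
move=> sqf_m m_neq1 m_neqN1 p_pr alphaN dvd_mp rm tk.
have p_gt1 := prime_gt1 p_pr; have p_gt0 := ltnW p_gt1.
have [-> | t_gt0] := posnP t.
  rewrite /evalZ /hpoly expn0 big_ord1 expr0 scale1r subn0 mul1n subnn expr0.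
  by rewrite rmorph1 hornerC divr1 rpred1.
set n := (p ^ t)%N; set beta := alpha ^+ (p ^ (k - t)).
have n_neq0 : n%:R != 0 :> algC by rewrite pnatr_eq0 -lt0n expn_gt0 p_gt0.
have beta_n : beta ^+ n = m%:~R by rewrite -exprM -expnD subnK.
have [w mrn] : exists w : int, m - r ^+ n = w * (p ^ k.+1)%:Z.
  apply/dvdzP; rewrite -eqz_mod_dvd eq_sym -modzXm (eqP rm) modzXm.
  by rewrite eqz_mod_exp_pexp // eqz_mod_dvd.
set D := w * (p ^ (k.+1 - t))%:Z.
have mrnD : m%:~R - r%:~R ^+ n = n%:R * D%:~R :> algC.
  rewrite -rmorphXn -rmorphB /= mrn /D -[n%:R]/((n%:Z)%:~R) -intrM mulrCA -PoszM.
  by rewrite /n -expnD subnKC // leqW.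
have p_D : (p %| D)%Z by rewrite dvdz_mull // dvdzE dvdn_exp // subn_gt0.
have gamma_neq0 : beta - r%:~R != 0.
  rewrite subr_eq0; apply/eqP => beta_r.
  have Xq_gt0 : (0 < p ^ (k - t))%N by rewrite expn_gt0 p_gt0.
  have : (p ^ k < size (('X^(p ^ (k - t)) - (r%:~R)%:P)%R : {poly rat}))%N.
    apply: (radical_root_size_gt sqf_m m_neq1 m_neqN1 _ alphaN).
    - by rewrite expn_gt0 p_gt0.
    - by rewrite -size_poly_eq0 size_XnsubC.
    rewrite rmorphB /= map_polyXn map_polyC rootE !hornerE /= rmorph_int.
    by rewrite -/beta beta_r subrr.
  by rewrite size_XnsubC // ltnS leqNgt ltn_exp2l //; lia.
apply: (binomial_quotient_Aint (n := n) (r := r) (D := D) _ gamma_neq0).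
- by rewrite expn_gt0 p_gt0.
- by rewrite mulrA hpoly_geometric // alphaN mrnD mulrC mulKf.
- by rewrite subrK beta_n mrnD.
- by move=> j jn; apply: dvdz_pexp_bin.
Qed.

Definition hpolyQ (r : int) (p k t : nat) : {poly rat} :=
  (p ^ t)%:R^-1 *: map_poly (fun z : int => z%:~R) (hpoly r p k t).

Definition cor_poly_family (r : int) (p k : nat) : seq {poly rat} :=
  flatten [seq [seq 'X^j * hpolyQ r p k t | j <- iota 0 (p ^ (k - t) - p ^ (k - t - 1))]
          | t <- iota 0 k]
  ++ [:: hpolyQ r p k k].

Lemma horner_XhpolyQ (r : int) (p k t j : nat) (x : algC) :
  (map_poly ratr ('X^j * hpolyQ r p k t)).[x]
    = x ^+ j * (evalZ (hpoly r p k t) x / (p ^ t)%:R).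
Proof.
rewrite rmorphM /= map_polyXn map_polyZ /= -map_poly_comp hornerM hornerXn hornerZ.
rewrite fmorphV rmorph_nat /evalZ [_^-1 * _]mulrC; congr (_ * (_.[x] * _)).
by apply: eq_map_poly => z /=; rewrite rmorph_int.
Qed.

Lemma cor_familyE (r : int) (p k : nat) (x : algC) :
  cor_family r p k x = [seq (map_poly ratr P).[x] | P <- cor_poly_family r p k].
Proof.
rewrite /cor_family /cor_poly_family map_cat map_flatten -map_comp; congr (_ ++ _).
  congr flatten; apply: eq_map => t /=; rewrite -map_comp; apply: eq_map => j /=.
  by rewrite horner_XhpolyQ.
by rewrite /= -[hpolyQ r p k k]mul1r -(expr0 'X) horner_XhpolyQ mul1r.
Qed.

Lemma size_hpolyQ (r : int) (p k t : nat) : (0 < p)%N -> (t <= k)%N ->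
  size (hpolyQ r p k t) = (p ^ k - p ^ (k - t)).+1.
Proof.
move=> p_gt0 tk; rewrite size_scale ?invr_eq0 ?pnatr_eq0 -?lt0n ?expn_gt0 ?p_gt0 //.
by rewrite size_map_inj_poly ?size_hpoly //; apply: intr_inj.
Qed.

Lemma size_XhpolyQ (r : int) (p k t j : nat) : (0 < p)%N -> (t <= k)%N ->
  size ('X^j * hpolyQ r p k t) = ((p ^ k - p ^ (k - t)).+1 + j)%N.
Proof.
by move=> p_gt0 tk; rewrite mulrC size_mulXn -?size_poly_eq0 size_hpolyQ // addnC.
Qed.

Lemma flatten_iota_steps (g : nat -> nat) : {homo g : x y / (x <= y)%N} ->
  forall a b, (flatten [seq iota (g t) (g t.+1 - g t) | t <- iota a b]
               = iota (g a) (g (a + b) - g a))%N.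
Proof.
move=> g_homo a b; elim: b a => [|b IHb] a /=; first by rewrite addn0 subnn.
rewrite IHb addSnnS.
have ga : (g a <= g a.+1)%N by apply: g_homo.
have gab : (g a.+1 <= g (a + b.+1))%N by apply: g_homo; rewrite addnS ltnS leq_addr.
by rewrite -{2}(subnKC ga) -iotaD; congr iota; lia.
Qed.

Lemma size_cor_poly_family (r : int) (p k : nat) : (0 < p)%N ->
  [seq size P | P : {poly rat} <- cor_poly_family r p k] = iota 1 (p ^ k).
Proof.
move=> p_gt0; pose g t := (p ^ k - p ^ (k - t)).+1.
have pexp_mono e1 e2 : (e1 <= e2)%N -> (p ^ e1 <= p ^ e2)%N by apply: leq_pexp2l.
have g_homo : {homo g : x y / (x <= y)%N}.
  by move=> x y xy; rewrite /g ltnS leq_sub2l // pexp_mono // leq_sub2l.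
have pk_gt0 : (0 < p ^ k)%N by rewrite expn_gt0 p_gt0.
have g0 : g 0%N = 1%N by rewrite /g subn0 subnn.
have gk : g k = (p ^ k)%N by rewrite /g subnn expn0 subn1 prednK.
rewrite /cor_poly_family map_cat map_flatten -map_comp /= size_hpolyQ // -/(g k).
rewrite (_ : map _ _ = [seq iota (g t) (g t.+1 - g t) | t <- iota 0 k]); last first.
  apply/eq_in_map => t; rewrite mem_iota add0n => /andP[_ tk] /=.
  rewrite -map_comp -{1}[g t]addn0 iotaDl.
  have -> : (g t.+1 - g t = p ^ (k - t) - p ^ (k - t - 1))%N.
    have := pexp_mono (k - t)%N k (leq_subr _ _).
    have := pexp_mono (k - t)%N.-1 (k - t)%N (leq_pred _).
    rewrite /g (subnS k t) subn1; lia.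
  by apply: eq_map => j /=; rewrite size_XhpolyQ // ltnW.
rewrite flatten_iota_steps // add0n g0 gk -{3}(subnK pk_gt0) iotaD.
by rewrite subnKC.
Qed.

Theorem corollary3p3 (m : int) (p k : nat) (alpha : algC) :
  squarefree_int m -> m != 1 -> m != -1 ->
  prime p -> (0 < k)%N ->
  alpha ^+ (p ^ k) = m%:~R ->
  let r : int := (m %% (p ^ k.+1)%:Z)%Z in
  let s : int := (vp_int p (m ^+ p - m))%:Z - 1 in
  k%:Z <= s ->
  size (cor_family r p k alpha) = (p ^ k)%N /\
  {in cor_family r p k alpha, forall x, x \in Aint} /\
  Qlin_indep (cor_family r p k alpha).
Proof.
move=> sqf_m m_neq1 m_neqN1 p_pr k_gt0 alphaN r s k_le_s.
have p_gt0 := prime_gt0 p_pr; have pk_gt0 : (0 < p ^ k)%N by rewrite expn_gt0 p_gt0.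
have v_gt : (k < vp_int p (m ^+ p - m))%N by move: k_le_s; rewrite /s; lia.
have dvd_mp : ((p ^ k.+1)%:Z %| m ^+ p - m)%Z.
  rewrite dvdzE pfactor_dvdn // lt0n.
  by apply: contraTneq v_gt; rewrite /vp_int => ->; rewrite logn0.
have r_m : (r == m %[mod (p ^ k.+1)%:Z])%Z by rewrite modz_mod.
have h_Aint t (tk : (t <= k)%N) :=
  hpoly_div_Aint sqf_m m_neq1 m_neqN1 p_pr alphaN dvd_mp r_m tk.
have sizes := size_cor_poly_family r k p_gt0.
split; [|split].
- by rewrite cor_familyE size_map -(size_map (fun P : {poly rat} => size P)) sizes size_iota.
- move=> x; rewrite mem_cat => /orP[/flattenP[_ /mapP[t t_k ->] /mapP[j _ ->]] | ].
    rewrite mem_iota in t_k; apply: rpredM; last exact/h_Aint/ltnW.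
    exact/rpredX/(Aint_of_exprn_int pk_gt0 alphaN).
  by rewrite inE => /eqP ->; apply: h_Aint.
- by rewrite cor_familyE; apply: (Qlin_indep_radical sqf_m m_neq1 m_neqN1 pk_gt0 alphaN).
Qed.
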